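(* Let $\Gamma$ be a group having a normal abelian subgroup $T$ with the following properties: (i) there is an integer $d \ge 1$ such that $T$ is isomorphic to $\mathbf{Z}^d$; (ii) the action of $\Gamma/T$ on $T$ induced by conjugation is faithful; (iii) the associated representation of $\Gamma/T$ on $T \otimes_{\mathbf Z} \mathbf Q \cong \mathbf Q^d$ is irreducible. Then $\Gamma$ is indecomposable.
   Context: A group $\Gamma$ is called indecomposable if $\Gamma \neq \{1\}$ and, for every isomorphism of $\Gamma$ with a direct product $\Gamma_1 \times \Gamma_2$, one of the groups $\Gamma_1, \Gamma_2$ is trivial. *)

(* Abstract (possibly infinite) groups are defined here by hand,
   since MathComp's fingroup only covers finite groups. *)
From HB Require Import structures.
From mathcomp Require Import all_boot all_order all_algebra.
Set Implicit Arguments. Unset Strict Implicit. Unset Printing Implicit Defensive.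
Import GRing.Theory Num.Theory.
Local Open Scope ring_scope.

Record AGroup := MkAGroup {
  gcarrier :> Type;
  gmul : gcarrier -> gcarrier -> gcarrier;
  ginv : gcarrier -> gcarrier;
  gone : gcarrier;
  gmulA : forall x y z, gmul x (gmul y z) = gmul (gmul x y) z;
  gmul1 : forall x, gmul gone x = x;
  gmulV : forall x, gmul (ginv x) x = gone }.

Arguments gmul {_}. Arguments ginv {_}. Arguments gone {_}.

Definition trivial_group (G : AGroup) : Prop := forall x : G, x = gone.

Definition is_hom (G H : AGroup) (f : G -> H) : Prop :=
  forall x y, f (gmul x y) = gmul (f x) (f y).

Definition is_iso (G H : AGroup) (f : G -> H) : Prop :=
  is_hom f /\ bijective f.

Section Prod.
Variables G1 G2 : AGroup.
Definition pmul (x y : G1 * G2) : G1 * G2 := (gmul x.1 y.1, gmul x.2 y.2).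
Definition pinv (x : G1 * G2) : G1 * G2 := (ginv x.1, ginv x.2).
Definition pone : G1 * G2 := (gone, gone).
Lemma pmulA x y z : pmul x (pmul y z) = pmul (pmul x y) z.
Proof. by rewrite /pmul /= !gmulA. Qed.
Lemma pmul1 x : pmul pone x = x.
Proof. by case: x => a b; rewrite /pmul /= !gmul1. Qed.
Lemma pmulV x : pmul (pinv x) x = pone.
Proof. by rewrite /pmul /= !gmulV. Qed.
Definition prod_group : AGroup := MkAGroup pmulA pmul1 pmulV.
End Prod.

Definition indecomposable (Gam : AGroup) : Prop :=
  ~ trivial_group Gam /\
  forall (G1 G2 : AGroup) (f : Gam -> prod_group G1 G2),
    is_iso f -> trivial_group G1 \/ trivial_group G2.

Definition is_subgroup (G : AGroup) (T : G -> Prop) : Prop :=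
  T gone /\ (forall x y, T x -> T y -> T (gmul x y)) /\ (forall x, T x -> T (ginv x)).

Definition is_normal (G : AGroup) (T : G -> Prop) : Prop :=
  forall g t, T t -> T (gmul (gmul g t) (ginv g)).

Definition is_abelian_sub (G : AGroup) (T : G -> Prop) : Prop :=
  forall x y, T x -> T y -> gmul x y = gmul y x.

Definition iso_Zd_onto (G : AGroup) (T : G -> Prop) (d : nat)
    (phi : 'rV[int]_d -> G) : Prop :=
  (forall u v, phi (u + v)%R = gmul (phi u) (phi v)) /\ injective phi /\
  (forall x, T x <-> exists v, phi v = x).

(* The conjugation action of Gamma/T on T is faithful: an element of Gamma
   acting trivially on T by conjugation lies in T. *)
Definition conj_faithful (G : AGroup) (T : G -> Prop) : Prop :=
  forall g, (forall t, T t -> gmul (gmul g t) (ginv g) = t) -> T g.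

(* A is the integral matrix (acting on row vectors) of conjugation by g on
   T = phi(Z^d). *)
Definition conj_matrix (G : AGroup) (d : nat) (phi : 'rV[int]_d -> G)
    (g : G) (A : 'M[int]_d) : Prop :=
  forall v, phi (v *m A) = gmul (gmul g (phi v)) (ginv g).

(* The representation of Gamma/T on T (x) Q = Q^d is irreducible: the only
   Q-subspaces of Q^d stable under all conjugation matrices are 0 and Q^d. *)
Definition rep_irreducible (G : AGroup) (d : nat) (phi : 'rV[int]_d -> G) : Prop :=
  forall U : 'M[rat]_d,
    (forall (g : G) (A : 'M[int]_d), conj_matrix phi g A ->
        (U *m map_mx (fun z : int => (z%:~R : rat)) A <= U)%MS) ->
    \rank U = 0%N \/ \rank U = d.

From mathcomp Require Import all_boot all_order all_algebra.
From mathcomp Require Import zify.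
From Stdlib Require Import Classical.
Set Implicit Arguments. Unset Strict Implicit. Unset Printing Implicit Defensive.
Import GRing.Theory Num.Theory.
Local Open Scope ring_scope.

(* If Gam = G1 x G2 with both factors nontrivial, the kernels K1, K2 of the
   two projections are nontrivial normal subgroups meeting trivially.  A
   nontrivial normal subgroup K meets T nontrivially: for g in K outside T,
   faithfulness gives t in T with [g, t] <> 1, and [g, t] lies in K and T.
   The Q-span of the lattice K /\ T is then a nonzero Gam-stable subspace of
   Q^d, hence all of Q^d by irreducibility, so every v in T has a positive
   multiple in K.  Taking v <> 0 (d >= 1), some multiple N1 N2 v <> 0 of v lies
   in both K1 and K2, a contradiction. *)

Section GroupTheory.
Variable G : AGroup.
Implicit Types x y : G.

Lemma gmulrV x : gmul x (ginv x) = gone.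
Proof.
rewrite -[gmul x (ginv x)]gmul1 -(gmulV (ginv x)).
by rewrite -gmulA [gmul (ginv x) (gmul x (ginv x))]gmulA gmulV gmul1.
Qed.

Lemma gmulr1 x : gmul x gone = x.
Proof. by rewrite -(gmulV x) gmulA gmulrV gmul1. Qed.

Lemma ginv1 : ginv (gone : G) = gone.
Proof. by rewrite -[ginv gone]gmulr1 gmulV. Qed.

Lemma gmulI : right_injective (@gmul G).
Proof.
by move=> a x y h; rewrite -(gmul1 x) -(gmul1 y) -(gmulV a) -!gmulA h.
Qed.

Lemma gmulIg : left_injective (@gmul G).
Proof.
by move=> a x y h; rewrite -(gmulr1 x) -(gmulr1 y) -(gmulrV a) !gmulA h.
Qed.

End GroupTheory.

Definition nontrivial_sub (G : AGroup) (K : G -> Prop) : Prop :=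
  exists2 g, K g & g <> gone.

Section Homomorphism.
Variables (G H : AGroup) (h : G -> H).
Hypothesis hom_h : is_hom h.

Lemma hom1 : h gone = gone.
Proof. by apply: (@gmulI _ (h gone)); rewrite -hom_h gmul1 gmulr1. Qed.

Lemma homV x : h (ginv x) = ginv (h x).
Proof. by apply: (@gmulIg _ (h x)); rewrite -hom_h !gmulV hom1. Qed.

Definition kernel (g : G) : Prop := h g = gone.

Lemma kernel_subgroup : is_subgroup kernel.
Proof.
rewrite /kernel; split; first exact: hom1.
split; first by move=> x y hx hy; rewrite hom_h hx hy gmul1.
by move=> x hx; rewrite homV hx ginv1.
Qed.

Lemma kernel_normal : is_normal kernel.
Proof. by move=> g t ht; rewrite /kernel !hom_h ht homV gmulr1 gmulrV. Qed.

End Homomorphism.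

Section DirectProduct.
Variables (Gam G1 G2 : AGroup) (f : Gam -> prod_group G1 G2).
Hypothesis iso_f : is_iso f.

Lemma hom_fst : is_hom (fun g => (f g).1).
Proof. by case: iso_f => hom_f _ x y; rewrite hom_f. Qed.

Lemma hom_snd : is_hom (fun g => (f g).2).
Proof. by case: iso_f => hom_f _ x y; rewrite hom_f. Qed.

Lemma kernels_prod_disjoint g :
  kernel (fun g => (f g).1) g -> kernel (fun g => (f g).2) g -> g = gone.
Proof.
case: iso_f => hom_f /bij_inj inj_f; rewrite /kernel => e1 e2.
by apply: inj_f; rewrite (hom1 hom_f); case: (f g) e1 e2 => /= a b -> ->.
Qed.

Lemma kernel_snd_nontrivial :
  ~ trivial_group G1 -> nontrivial_sub (kernel (fun g => (f g).2)).
Proof.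
case: iso_f => hom_f [f' _ f'K] /not_all_ex_not [x x1].
exists (f' (x, gone)); first by rewrite /kernel f'K.
by move=> e; apply: x1; have := f'K (x, gone); rewrite e (hom1 hom_f); case.
Qed.

Lemma kernel_fst_nontrivial :
  ~ trivial_group G2 -> nontrivial_sub (kernel (fun g => (f g).1)).
Proof.
case: iso_f => hom_f [f' _ f'K] /not_all_ex_not [x x1].
exists (f' (gone, x)); first by rewrite /kernel f'K.
by move=> e; apply: x1; have := f'K (gone, x); rewrite e (hom1 hom_f); case.
Qed.

End DirectProduct.

Lemma normal_meets_faithful (G : AGroup) (T K : G -> Prop) :
  is_subgroup T -> is_normal T -> conj_faithful T ->
  is_subgroup K -> is_normal K -> nontrivial_sub K ->
  nontrivial_sub (fun c => K c /\ T c).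
Proof.
move=> [_ [TM TV]] nT fT [_ [KM KV]] nK [g Kg g1].
have [Tg|Tg] := classic (T g); first by exists g.
have : ~ (forall t, T t -> gmul (gmul g t) (ginv g) = t).
  by move=> h; apply/Tg/fT.
move=> /not_all_ex_not [t /(imply_to_and (T t)) [Tt nfix]].
exists (gmul (gmul (gmul g t) (ginv g)) (ginv t)); last first.
  by move=> e; apply: nfix; apply: (@gmulIg _ (ginv t)); rewrite e gmulrV.
split; last by apply: TM; [exact: nT | exact: TV].
rewrite -!gmulA [gmul t (gmul _ _)]gmulA; apply: KM => //.
exact/nK/KV.
Qed.

Section GreatestSubspace.
Variables (F : fieldType) (n : nat) (P : 'M[F]_n -> Prop).
Hypotheses (P0 : P 0) (P_adds : forall U V, P U -> P V -> P (U + V)%MS).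

Lemma exists_greatest_addsmx_closed :
  exists2 W, P W & forall U, P U -> (U <= W)%MS.
Proof.
suff: forall k W, P W -> (n - \rank W <= k)%N ->
    exists2 W, P W & forall U, P U -> (U <= W)%MS.
  by move/(_ n 0); apply=> //; rewrite leq_subr.
elim=> [|k IHk] W PW rankW.
  exists W => // U PU; apply: submx_trans (addsmxSr W U) _.
  rewrite -(mxrank_leqif_sup (addsmxSl W U)).2.
  have := mxrankS (addsmxSl W U); have := rank_leq_col (W + U)%MS; lia.
have [maxW|] := classic (forall U, P U -> (U <= W)%MS); first by exists W.
move=> /not_all_ex_not [U /(imply_to_and (P U)) [PU notUW]].
apply: (IHk (W + U)%MS); first exact: P_adds.
have : \rank W != \rank (W + U)%MS.
  rewrite (mxrank_leqif_sup (addsmxSl W U)).2; apply: contra_notN notUW.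
  exact: submx_trans (addsmxSr W U).
have := mxrankS (addsmxSl W U); have := rank_leq_col (W + U)%MS; lia.
Qed.

End GreatestSubspace.

Definition ratmx m n (A : 'M[int]_(m, n)) : 'M[rat]_(m, n) :=
  map_mx (fun z : int => z%:~R) A.

Lemma ratmx_inj m n : injective (@ratmx m n).
Proof.
move=> A B /matrixP eAB; apply/matrixP => i j.
by have := eAB i j; rewrite !mxE => /intr_inj.
Qed.

Lemma ratmx_eq0 m n (A : 'M[int]_(m, n)) : (ratmx A == 0) = (A == 0).
Proof. by rewrite -(inj_eq (@ratmx_inj m n)) /ratmx map_mx0. Qed.

Section LatticeSpan.
Variables (n : nat) (L : 'rV[int]_n -> Prop).
Hypotheses (L0 : L 0) (LD : forall u v, L u -> L v -> L (u + v))
  (LN : forall v, L v -> L (- v)).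

Lemma lattice_mulrn v N : L v -> L (v *+ N).
Proof. by move=> Lv; elim: N => [|N IHN]; rewrite ?mulr0n ?mulrS; auto. Qed.

Lemma lattice_scale v (z : int) : L v -> L (z *: v).
Proof.
move=> Lv; case: z => N.
  by rewrite -natz scaler_nat; apply: lattice_mulrn.
by rewrite NegzE scaleNr -natz scaler_nat; apply/LN/lattice_mulrn.
Qed.

(* The Q-span of L consists of the rational vectors having a positive integer
   multiple in L. *)
Definition sub_qspan m (W : 'M[rat]_(m, n)) : Prop :=
  forall w : 'rV_n, (w <= W)%MS ->
    exists2 N, (0 < N)%N & exists2 v, L v & w *+ N = ratmx v.

Lemma sub_qspan0 : sub_qspan (0 : 'M_n).
Proof.
move=> w; rewrite submx0 => /eqP ->; exists 1%N => //.
by exists 0; rewrite // /ratmx map_mx0.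
Qed.

Lemma sub_qspan_adds m1 m2 (U : 'M_(m1, n)) (V : 'M_(m2, n)) :
  sub_qspan U -> sub_qspan V -> sub_qspan (U + V)%MS.
Proof.
move=> spanU spanV w /sub_addsmxP [[a b] /= ->].
have [N1 N1_gt0 [u Lu eu]] := spanU _ (submxMl a U).
have [N2 N2_gt0 [v Lv ev]] := spanV _ (submxMl b V).
exists (N1 * N2)%N; first by rewrite muln_gt0 N1_gt0.
exists (u *+ N2 + v *+ N1); first by apply: LD; apply: lattice_mulrn.
rewrite /ratmx raddfD !raddfMn /= -/(ratmx u) -/(ratmx v) -eu -ev mulrnDl.
by rewrite -!mulrnA mulnC.
Qed.

Lemma sub_qspan_genmx m (U : 'M_(m, n)) : sub_qspan U -> sub_qspan <<U>>%MS.
Proof. by move=> spanU w; rewrite genmxE; apply: spanU. Qed.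

Lemma sub_qspan_row v : L v -> sub_qspan (ratmx v).
Proof.
move=> Lv w /submxP [a ->]; rewrite [a]mx11_scalar mul_scalar_mx.
set c := a 0 0; exists `|denq c|%N; first by rewrite absz_gt0 denq_neq0.
exists (numq c *: v); first exact: lattice_scale.
rewrite scalerMnl -mulr_natr natr_absz gtr0_norm ?denq_gt0 // -numqE.
by rewrite /ratmx map_mxZ.
Qed.

Lemma sub_qspan_mulmx m (W : 'M_(m, n)) (A : 'M[int]_n) :
  (forall v, L v -> L (v *m A)) -> sub_qspan W -> sub_qspan (W *m ratmx A).
Proof.
move=> LA spanW w /submxP [a ->].
have [N N_gt0 [v Lv ev]] := spanW _ (submxMl a W).
exists N => //; exists (v *m A); first exact: LA.
by rewrite mulmxA -scaler_nat scalemxAl scaler_nat ev /ratmx map_mxM.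
Qed.

Lemma sub_qspan_greatest : exists2 W : 'M_n, sub_qspan W &
  forall m (U : 'M_(m, n)), sub_qspan U -> (U <= W)%MS.
Proof.
have [W spanW maxW] := exists_greatest_addsmx_closed sub_qspan0
  (@sub_qspan_adds n n).
exists W => // m U /sub_qspan_genmx /maxW; by rewrite genmxE.
Qed.

End LatticeSpan.

Section NormalSubgroups.
Variables (Gam : AGroup) (T : Gam -> Prop) (d : nat) (phi : 'rV[int]_d -> Gam).
Hypotheses (sT : is_subgroup T) (nT : is_normal T) (isoT : iso_Zd_onto T phi)
  (fT : conj_faithful T) (irrT : rep_irreducible phi).

Lemma phi0 : phi 0 = gone.
Proof.
case: isoT => phiD _; apply: (@gmulI _ (phi 0)).
by rewrite -phiD addr0 gmulr1.
Qed.

Lemma phiN v : phi (- v) = ginv (phi v).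
Proof.
case: isoT => phiD _; apply: (@gmulIg _ (phi v)).
by rewrite -phiD addNr gmulV phi0.
Qed.

Section NormalLattice.
Variable K : Gam -> Prop.
Hypotheses (sK : is_subgroup K) (nK : is_normal K).

Lemma subgroup_phi0 : K (phi 0).
Proof. by rewrite phi0; case: sK. Qed.

Lemma subgroup_phiD u v : K (phi u) -> K (phi v) -> K (phi (u + v)).
Proof. by case: isoT => -> _; case: sK => _ [KM _]; apply: KM. Qed.

Lemma subgroup_phiN v : K (phi v) -> K (phi (- v)).
Proof. by rewrite phiN; case: sK => _ [_ KV]; apply: KV. Qed.

Lemma subgroup_phiMn v N : K (phi v) -> K (phi (v *+ N)).
Proof. exact: (lattice_mulrn subgroup_phi0 subgroup_phiD). Qed.

Let L v := K (phi v).

Lemma normal_meets_lattice : nontrivial_sub K -> exists2 v, L v & v != 0.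
Proof.
move=> /(normal_meets_faithful sT nT fT sK nK) [c [Kc Tc] c1].
case: isoT => _ [_ /(_ c) [/(_ Tc) [v ev] _]].
exists v; first by rewrite /L ev.
by apply: contra_notN c1 => /eqP v0; rewrite -ev v0 phi0.
Qed.

Lemma normal_multiple_in v : nontrivial_sub K ->
  exists2 N, (0 < N)%N & K (phi (v *+ N)).
Proof.
move=> /normal_meets_lattice [u Lu u0].
have [W spanW maxW] := sub_qspan_greatest subgroup_phi0 subgroup_phiD.
have stableW g A : conj_matrix phi g A -> (W *m ratmx A <= W)%MS.
  move=> conjA; apply/maxW/sub_qspan_mulmx => // t Lt.
  by rewrite /L conjA; apply: nK.
have [/eqP|rankW] := irrT stableW.
  rewrite mxrank_eq0 => /eqP W0.
  have := maxW _ _ (sub_qspan_row subgroup_phi0 subgroup_phiD subgroup_phiN Lu).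
  by rewrite W0 submx0 ratmx_eq0 (negPf u0).
have [N N_gt0 [w Lw ew]] := spanW _ (submx_full (ratmx v) (introT eqP rankW)).
exists N => //; suff -> : v *+ N = w by [].
by apply: ratmx_inj; rewrite -ew /ratmx raddfMn.
Qed.

End NormalLattice.

Lemma normal_subgroups_meet (K1 K2 : Gam -> Prop) : (0 < d)%N ->
  is_subgroup K1 -> is_normal K1 -> nontrivial_sub K1 ->
  is_subgroup K2 -> is_normal K2 -> nontrivial_sub K2 ->
  nontrivial_sub (fun g => K1 g /\ K2 g).
Proof.
move=> d_gt0 sK1 nK1 /(normal_multiple_in sK1 nK1 (const_mx 1)) [N1 N1_gt0 K1v].
move=> sK2 nK2 /(normal_multiple_in sK2 nK2 (const_mx 1)) [N2 N2_gt0 K2v].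
set v : 'rV[int]_d := const_mx 1 in K1v K2v *.
have vN_neq0 : v *+ (N1 * N2) != 0.
  apply/eqP => /matrixP /(_ 0 (Ordinal d_gt0)).
  by rewrite mulmxnE !mxE; apply/eqP; rewrite pnatr_eq0 -lt0n muln_gt0 N1_gt0.
exists (phi (v *+ (N1 * N2))); last first.
  have [_ [phi_inj _]] := isoT.
  by move=> e; move: vN_neq0; rewrite (phi_inj (v *+ _) 0) ?eqxx // e phi0.
split; first by rewrite mulrnA; apply: subgroup_phiMn.
by rewrite mulnC mulrnA; apply: subgroup_phiMn.
Qed.

End NormalSubgroups.

Theorem proposition1 (Gam : AGroup) (T : Gam -> Prop) (d : nat)
  (phi : 'rV[int]_d -> Gam) :
  is_subgroup T -> is_normal T -> is_abelian_sub T ->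
  (1 <= d)%N -> iso_Zd_onto T phi ->
  conj_faithful T ->
  rep_irreducible phi ->
  indecomposable Gam.
Proof.
(* T is abelian anyway, being the image of Z^d. *)
move=> sT nT _ d_gt0 isoT fT irrT; split.
  move=> triv; have [_ [phi_inj _]] := isoT.
  have one0 : const_mx 1 = 0 :> 'rV[int]_d.
    by apply: phi_inj; rewrite [LHS]triv [RHS]triv.
  by move/matrixP: one0 => /(_ 0 (Ordinal d_gt0)) /eqP; rewrite !mxE oner_eq0.
move=> G1 G2 f iso_f.
have [triv1|ntG1] := classic (trivial_group G1); first by left.
have [triv2|ntG2] := classic (trivial_group G2); first by right.
have [g [K1g K2g] g1] := normal_subgroups_meet sT nT isoT fT irrT d_gt0
  (kernel_subgroup (hom_fst iso_f)) (kernel_normal (hom_fst iso_f))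
  (kernel_fst_nontrivial iso_f ntG2)
  (kernel_subgroup (hom_snd iso_f)) (kernel_normal (hom_snd iso_f))
  (kernel_snd_nontrivial iso_f ntG1).
by case: g1; apply: (kernels_prod_disjoint iso_f).
Qed.
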